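(* For each integer $m\ge 2$ let $N_m=p_1p_2\cdots p_m$ be the product of the first $m$ primes (so $N_m\ge 6$), and let $H_m=\{0,N_m,2N_m,\dots,(m-1)N_m\}$. Then $\mathfrak{S}(H_m)\to\infty$ as $m\to\infty$.
   Context: For a finite set $H$ of $m$ integers, $\nu_p(H)$ denotes the number of distinct residues modulo $p$ among the elements of $H$. The Selberg (singular series) constant is $$\mathfrak{S}(H)=\prod_{p}\Big(1-\frac{\nu_p(H)}{p}\Big)\Big(1-\frac1p\Big)^{-m},$$ where the product runs over all primes $p$. *)

From HB Require Import structures.
From mathcomp Require Import all_boot all_order all_algebra.
From mathcomp Require Import all_classical all_reals all_analysis.
Set Implicit Arguments. Unset Strict Implicit. Unset Printing Implicit Defensive.
Import Order.TTheory GRing.Theory Num.Theory numFieldNormedType.Exports.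

Definition nu (p : nat) (H : seq int) : nat :=
  size (undup [seq (x %% Posz p)%Z | x <- H]).

Local Open Scope ring_scope.
Local Open Scope classical_set_scope.

Definition singular_partial (R : realType) (H : seq int) (x : nat) : R :=
  \prod_(p < x.+1 | prime p)
     ((1 - (nu p H)%:R / (p%:R : R)) * (1 - (p%:R : R)^-1) ^- (size (undup H))).

Definition singular_series (R : realType) (H : seq int) : R :=
  lim (singular_partial R H @ \oo).

Local Close Scope ring_scope.

Lemma next_prime_ex (n : nat) : exists p, (n < p) && prime p.
Proof. by case: (prime_above n) => p Hp Pp; exists p; rewrite Hp Pp. Qed.

Definition next_prime (n : nat) : nat := ex_minn (next_prime_ex n).

(* nth_prime 0 = 2, nth_prime 1 = 3, ... : nth_prime i is p_{i+1} *)
Fixpoint nth_prime (k : nat) : nat :=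
  match k with 0 => 2 | k'.+1 => next_prime (nth_prime k') end.

Definition primorial (m : nat) : nat := \prod_(i < m) nth_prime i.

Definition Hset (m : nat) : seq int :=
  [seq Posz (k * primorial m)%N | k <- iota 0 m].

From HB Require Import structures.
From mathcomp Require Import all_boot all_order all_algebra.
From mathcomp Require Import all_classical all_reals all_analysis.
From mathcomp Require Import zify ring lra.
Import Order.TTheory GRing.Theory Num.Theory numFieldNormedType.Exports.
Local Open Scope classical_set_scope.
Local Open Scope ring_scope.

(* For the primes p <= p_m, which divide N_m, the set H_m occupies a single
   class mod p and its Euler factor is (1 - 1/p)^(1-m) >= 1; for p > p_m >= 2m-1
   it occupies m classes and the factor lies in [1 - m^2/p^2, 1]. Hence the
   partial products increase up to p_m and decrease afterwards, so they
   converge, and the tail beyond p_m is at least prod_(n > p_m) (1 - m^2/n^2),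
   which telescopes to at least p_m^_m / (p_m + m)^_m >= 3^-m. The factors at
   2, 3 and 5 alone give (15/4)^(m-1), so S(H_m) >= (5/4)^(m-1) / 3 >= m / 12. *)

Lemma next_primeP n : [/\ n < next_prime n, prime (next_prime n) &
  forall q, n < q -> prime q -> next_prime n <= q]%N.
Proof.
rewrite /next_prime; case: ex_minnP => p /andP[lt_np p_pr] p_min.
by split=> // q lt_nq q_pr; apply: p_min; rewrite lt_nq q_pr.
Qed.

Lemma prime_nth_prime k : prime (nth_prime k).
Proof. by case: k => [|k] //=; case: (next_primeP (nth_prime k)). Qed.

Lemma nth_prime_ltS k : (nth_prime k < nth_prime k.+1)%N.
Proof. by case: (next_primeP (nth_prime k)). Qed.

Lemma leq_nth_prime : {homo nth_prime : i j / (i <= j)%N}.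
Proof. by apply: (homo_leq leqnn leq_trans) => k; apply/ltnW/nth_prime_ltS. Qed.

Lemma nth_prime_enum k p : prime p -> (p <= nth_prime k)%N ->
  exists2 i, (i <= k)%N & p = nth_prime i.
Proof.
move=> p_pr; elim: k => [|k IHk] le_pk.
  by exists 0%N => //; apply/eqP; rewrite eqn_leq le_pk prime_gt1.
have [/IHk[i le_ik ->]|lt_kp] := leqP p (nth_prime k); first by exists i => //; apply: leqW.
exists k.+1 => //; apply/eqP; rewrite eqn_leq le_pk.
by case: (next_primeP (nth_prime k)) => _ _ ->.
Qed.

(* Primes beyond 2 are odd, so consecutive ones differ by at least 2. *)
Lemma nth_prime_ge k : (2 * k + 1 <= nth_prime k)%N.
Proof.
elim: k => [|k IHk]; first by [].
have lt_k := nth_prime_ltS k; have gt1_k := prime_gt1 (prime_nth_prime k).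
have [eq2|odd_k1] := even_prime (prime_nth_prime k.+1); first lia.
have : nth_prime k.+1 != (2 * k + 2)%N by apply: contraTneq odd_k1 => ->; rewrite oddD oddM.
lia.
Qed.

Lemma primorial_gt0 m : (0 < primorial m)%N.
Proof. by apply: prodn_gt0 => i; apply/prime_gt0/prime_nth_prime. Qed.

Lemma prime_dvd_primorial m p : (0 < m)%N -> prime p ->
  (p %| primorial m)%N = (p <= nth_prime m.-1)%N.
Proof.
move=> m_gt0 p_pr; apply/idP/idP.
  rewrite /primorial Euclid_dvd_prod // big_has => /hasP[i _] /=.
  rewrite dvdn_prime2 ?prime_nth_prime // => /eqP->.
  by apply: leq_nth_prime; have := ltn_ord i; lia.
case/(nth_prime_enum _ _ p_pr) => i le_im ->.
have lt_im : (i < m)%N by lia.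
by rewrite /primorial (bigD1 (Ordinal lt_im)) //= dvdn_mulr.
Qed.

Definition multiples (N m : nat) : seq int := [seq Posz (k * N)%N | k <- iota 0 m].

Lemma Hset_multiples m : Hset m = multiples (primorial m) m.
Proof. by []. Qed.

Lemma size_undup_multiples N m : (0 < N)%N -> size (undup (multiples N m)) = m.
Proof.
move=> N_gt0; rewrite undup_id ?size_map ?size_iota // map_inj_uniq ?iota_uniq //.
by move=> a b [] /eqP; rewrite eqn_pmul2r // => /eqP.
Qed.

Lemma nu_multiples_dvd N m p : (0 < m)%N -> (p %| N)%N -> nu p (multiples N m) = 1%N.
Proof.
case: m => // m _ dvd_pN; rewrite /nu -map_comp; set s := map _ _.
have /all_pred1P-> : all (pred1 0%Z) s.
  by apply/allP => _ /mapP[k _ ->]; rewrite /= modz_nat (eqP (dvdn_mull k dvd_pN)).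
rewrite size_map size_iota {s}.
by elim: m => [|m IHm] //=; rewrite in_cons eqxx.
Qed.

Lemma nu_multiples_coprime N m p : (m <= p)%N -> coprime p N ->
  nu p (multiples N m) = m.
Proof.
move=> le_mp co_pN; rewrite /nu -map_comp undup_id ?size_map ?size_iota //.
rewrite map_inj_in_uniq ?iota_uniq // => a b; rewrite !mem_iota /= => ltam ltbm.
rewrite !modz_nat => -[].
wlog le_ab : a b ltam ltbm / (a <= b)%N.
  by move=> W; have [/W|/ltnW/W] := leqP a b; [apply | move=> {}W /esym/W->].
move=> eq_mod; apply/eqP; rewrite eqn_leq le_ab -subn_eq0 /=.
have : (p %| b - a)%N.
  by rewrite -(Gauss_dvdl _ co_pN) mulnBl -eqn_mod_dvd ?leq_mul2r ?le_ab ?orbT // eq_mod.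
by rewrite /dvdn modn_small //; lia.
Qed.

Section LocalFactor.
Variable R : realFieldType.

Lemma bernoulli_ineq (x : R) n : -1 <= x -> 1 + n%:R * x <= (1 + x) ^+ n.
Proof.
move=> x_ge; elim: n => [|n IHn]; first by rewrite mul0r addr0.
have x1_ge0 : 0 <= 1 + x by lra.
have nx2_ge0 : 0 <= n%:R * x ^+ 2 by rewrite mulr_ge0 ?sqr_ge0.
by have := ler_wpM2l x1_ge0 IHn; rewrite exprS mulrSr; move: nx2_ge0; rewrite expr2; nra.
Qed.

(* The upper bound is Bernoulli for [-t]; the lower one comes from
   [(1 + m t) (1 - t)^m <= (1 + t)^m (1 - t)^m = (1 - t^2)^m <= 1]. *)
Lemma local_factor_bounds m (t : R) : 0 <= t < 1 -> m%:R * t < 1 ->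
  let F := (1 - m%:R * t) / (1 - t) ^+ m in
  [/\ 0 < F, F <= 1 & 1 - (m%:R * t) ^+ 2 <= F].
Proof.
move=> /andP[t_ge0 t_lt1] mt_lt1 F.
have pow_gt0 : 0 < (1 - t) ^+ m by apply: exprn_gt0; lra.
have pow_le : (1 + m%:R * t) * (1 - t) ^+ m <= 1.
  apply: le_trans (_ : (1 + t) ^+ m * (1 - t) ^+ m <= 1).
    by apply: ler_wpM2r; [exact: ltW | apply: bernoulli_ineq; lra].
  by rewrite -exprMn; apply: exprn_ile1; nra.
split; rewrite /F.
- by rewrite divr_gt0 //; lra.
- by rewrite ler_pdivrMr // mul1r -mulrN; apply: bernoulli_ineq; lra.
rewrite ler_pdivlMr // -[X in _ <= X]mulr1.
have -> : 1 - (m%:R * t) ^+ 2 = (1 - m%:R * t) * (1 + m%:R * t) by ring.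
by rewrite -mulrA; apply: ler_wpM2l => //; lra.
Qed.

End LocalFactor.

(* The partial products of [\prod_n (1 - m^2 / n^2)] telescope to ratios of
   these values. *)
Definition ffact_ratio (R : realFieldType) (m x : nat) : R :=
  (x ^_ m)%:R / ((x + m) ^_ m)%:R.

Section FfactRatio.
Variables (R : realFieldType) (m : nat).
Local Notation r := (ffact_ratio R m).

Lemma ffact_ratio_ge0 x : 0 <= r x.
Proof. by rewrite divr_ge0. Qed.

Lemma ffact_ratio_le1 x : r x <= 1.
Proof.
rewrite ler_pdivrMr ?ltr0n ?ffact_gt0 ?leq_addl // mul1r ler_nat !ffact_prod.
by apply: leq_prod => i _; lia.
Qed.

Lemma ffact_ratio_ge x : (2 * m <= x + 1)%N -> ((3 ^ m)%:R)^-1 <= r x.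
Proof.
move=> le_2m_x.
rewrite ler_pdivlMr ?ltr0n ?ffact_gt0 ?leq_addl // ler_pdivrMl ?ltr0n ?expn_gt0 //.
rewrite -natrM ler_nat.
have -> : (3 ^ m * x ^_ m = \prod_(i < m) (3 * (x - i)))%N.
  by rewrite big_split /= prod_nat_const card_ord ffact_prod.
by rewrite ffact_prod; apply: leq_prod => i _; have := ltn_ord i; lia.
Qed.

Lemma ffact_ratioS x : (m <= x)%N -> r x = r x.+1 * (1 - (m%:R / x.+1%:R) ^+ 2).
Proof.
move=> le_mx.
have xm_gt0 : (0 : R) < (x.+1 - m)%:R by rewrite ltr0n subn_gt0 ltnS.
have b_gt0 : (0 : R) < ((x + m) ^_ m)%:R by rewrite ltr0n ffact_gt0 leq_addl.
have num : (x.+1 ^_ m)%:R = x.+1%:R * (x ^_ m)%:R / (x.+1 - m)%:R :> R.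
  by rewrite -natrM -ffactSS ffactnSr natrM mulfK ?gt_eqF.
have den : ((x.+1 + m) ^_ m)%:R = (x.+1 + m)%:R * ((x + m) ^_ m)%:R / x.+1%:R :> R.
  by rewrite -natrM addSn -ffactSS ffactnSr subSn ?leq_addl // addnK natrM mulfK.
rewrite /r /ffact_ratio num den natrD natrB 1?ltnW // in xm_gt0 *; field.
by rewrite !gt_eqF //; lra.
Qed.

End FfactRatio.

Section TailProduct.
Variables (R : realFieldType) (m K : nat) (u c : nat -> R).
Hypotheses (le_mK : (m <= K)%N) (u_ge0 : forall x, 0 <= u x).
Hypothesis u_S : forall x, u x.+1 = u x * c x.+1.
Hypothesis c_ge : forall x, (K <= x)%N -> 1 - (m%:R / x.+1%:R) ^+ 2 <= c x.+1.

(* [u x * ffact_ratio m x] is nondecreasing from [K] on. *)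
Lemma tail_product_ge x : (K <= x)%N -> u K * ffact_ratio R m K <= u x.
Proof.
move=> le_Kx; apply: le_trans (_ : u x * ffact_ratio R m x <= u x).
  elim: x le_Kx => [|x IHx]; first by rewrite leqn0 => /eqP->.
  rewrite leq_eqVlt ltnS => /predU1P[<- //|le_Kx]; apply: le_trans (IHx le_Kx) _.
  rewrite u_S (ffact_ratioS R m _ (leq_trans le_mK le_Kx)) -mulrA.
  by apply: ler_wpM2l => //; rewrite mulrC; apply/ler_wpM2r/c_ge/le_Kx/ffact_ratio_ge0.
by rewrite ler_piMr ?ffact_ratio_le1.
Qed.

End TailProduct.

Lemma eventually_nonincreasing_cvgn (R : realType) (u : R^nat) K :
  (forall n, 0 <= u n) -> (forall n, (K <= n)%N -> u n.+1 <= u n) -> cvgn u.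
Proof.
move=> u_ge0 u_dec.
have u_noninc : nonincreasing_seq (fun n => u (n + K)%N).
  apply: (homo_leq (r := fun a b => b <= a)) => [//|? ? ? ? /le_trans->//|n].
  by rewrite addSn u_dec ?leq_addl.
have u_lb : has_lbound (range (fun n => u (n + K)%N)) by exists 0 => _ [n _ <-].
by apply: cvgP; rewrite -(cvg_shiftn K); apply: nonincreasing_cvgn.
Qed.

Definition euler_factor (R : realType) (H : seq int) (p : nat) : R :=
  if prime p then (1 - (nu p H)%:R / p%:R) * (1 - p%:R^-1) ^- size (undup H) else 1.

Lemma singular_partial0 (R : realType) H : singular_partial R H 0 = 1.
Proof. by rewrite /singular_partial big_mkcond big_ord1. Qed.

Lemma singular_partialS (R : realType) H x :
  singular_partial R H x.+1 = singular_partial R H x * euler_factor R H x.+1.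
Proof. by rewrite /singular_partial big_mkcond big_ord_recr /= -big_mkcond. Qed.

Section PrimorialMultiples.
Variables (R : realType) (m : nat).
Hypothesis m_gt0 : (0 < m)%N.
Local Notation K := (nth_prime m.-1).
Local Notation u := (singular_partial R (Hset m)).
Local Notation c := (euler_factor R (Hset m)).

Lemma leq_2m_K : (2 * m <= K + 1)%N.
Proof. by have := nth_prime_ge m.-1; lia. Qed.

Lemma euler_factor_small p : prime p -> (p <= K)%N ->
  c p = ((1 - p%:R^-1) ^+ m.-1)^-1.
Proof.
move=> p_pr le_pK; have p_gt1 := prime_gt1 p_pr.
have t_neq0 : 1 - p%:R^-1 != 0 :> R.
  by rewrite subr_eq0 eq_sym invr_eq1 pnatr_eq1; case: (p) p_gt1 => [|[]].
rewrite /euler_factor p_pr Hset_multiples nu_multiples_dvd ?prime_dvd_primorial //.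
rewrite size_undup_multiples ?primorial_gt0 //.
by case: (m) m_gt0 => // m' _; rewrite exprS invfM mulrA mul1r mulfV ?mul1r.
Qed.

Lemma euler_factor_ge1 p : (p <= K)%N -> 1 <= c p.
Proof.
move=> le_pK; case p_pr: (prime p); last by rewrite /euler_factor p_pr.
have p_gt1 : (1 < p%:R :> R) by rewrite ltr1n prime_gt1.
have t_gt0 : 0 < 1 - p%:R^-1 :> R by rewrite subr_gt0 invf_lt1 // (lt_trans ltr01).
rewrite euler_factor_small // invf_ge1 ?exprn_gt0 // exprn_ile1 ?ltW //.
by rewrite ltrBlDr ltrDl invr_gt0 (lt_trans ltr01).
Qed.

Lemma euler_factor_large p : (K < p)%N ->
  [/\ 0 < c p, c p <= 1 & 1 - (m%:R / p%:R) ^+ 2 <= c p].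
Proof.
move=> lt_Kp; case p_pr: (prime p); last first.
  by rewrite /euler_factor p_pr lerBlDr lerDl sqr_ge0 ltr01.
have lt_mp : (m < p)%N by have := leq_2m_K; lia.
have co_p : coprime p (primorial m).
  by rewrite prime_coprime // prime_dvd_primorial // -ltnNge.
rewrite /euler_factor p_pr Hset_multiples nu_multiples_coprime ?(ltnW lt_mp) //.
rewrite size_undup_multiples ?primorial_gt0 //.
apply: local_factor_bounds.
- by rewrite invr_ge0 ler0n invf_lt1 ?ltr1n ?ltr0n; lia.
- by rewrite -/(_ / _) ltr_pdivrMr ?ltr0n ?mul1r ?ltr_nat; lia.
Qed.

Lemma euler_factor_gt0 p : 0 < c p.
Proof.
have [le_pK|lt_Kp] := leqP p K; last by case: (euler_factor_large _ lt_Kp).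
exact: lt_le_trans ltr01 (euler_factor_ge1 _ le_pK).
Qed.

Lemma singular_partial_gt0 x : 0 < u x.
Proof.
elim: x => [|x IHx]; first by rewrite singular_partial0.
by rewrite singular_partialS mulr_gt0 ?euler_factor_gt0.
Qed.

Lemma cvg_singular_partial_primorial : cvgn u.
Proof.
apply: (@eventually_nonincreasing_cvgn _ _ K) => [n|n le_Kn].
  exact/ltW/singular_partial_gt0.
rewrite singular_partialS ler_piMr ?(ltW (singular_partial_gt0 n)) //.
by case: (euler_factor_large _ (leq_ltn_trans le_Kn (ltnSn n))).
Qed.

Lemma singular_series_primorial_ge_ratio : u K * ffact_ratio R m K <= singular_series R (Hset m).
Proof.
apply: limr_ge cvg_singular_partial_primorial _.
near=> x; apply: (@tail_product_ge _ m K _ c) => //.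
- by have := leq_2m_K; lia.
- by move=> n; apply/ltW/singular_partial_gt0.
- exact: singular_partialS.
- by move=> n le_Kn; case: (euler_factor_large _ (leq_ltn_trans le_Kn (ltnSn n))).
by near: x; apply: nbhs_infty_ge.
Unshelve. all: by end_near.
Qed.

Lemma singular_partial_le x y : (x <= y <= K)%N -> u x <= u y.
Proof.
elim: y => [|y IHy]; first by rewrite leqn0 => /andP[/eqP-> _].
rewrite leq_eqVlt ltnS => /andP[/predU1P[-> //|le_xy] le_yK].
rewrite singular_partialS; apply: le_trans (IHy _) _; first by rewrite le_xy ltnW.
by rewrite ler_peMr ?(ltW (singular_partial_gt0 y)) ?euler_factor_ge1.
Qed.

Lemma singular_partial_primorial_ge : (5 <= K)%N -> (15 / 4) ^+ m.-1 <= u K.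
Proof.
move=> le_5K.
have u5_le : u 5 <= u K by apply: singular_partial_le; rewrite le_5K leqnn.
apply: le_trans u5_le.
rewrite !singular_partialS singular_partial0 mul1r.
have [-> ->] : c 1 = 1 /\ c 4 = 1 by [].
rewrite !mulr1 mul1r !euler_factor_small ?(leq_trans _ le_5K) // -!invfM -!exprMn.
have -> : (1 - 2%:R^-1) * (1 - 3%:R^-1) * (1 - 5%:R^-1) = (15 / 4 : R)^-1 by field.
by rewrite exprVn invrK.
Qed.

End PrimorialMultiples.

Lemma singular_series_primorial_ge (R : realType) m : (3 <= m)%N ->
  m%:R / 12 <= singular_series R (Hset m).
Proof.
move=> m_ge3; have m_gt0 : (0 < m)%N by apply: leq_trans m_ge3.
have le_5K : (5 <= nth_prime m.-1)%N by have := leq_2m_K _ m_gt0; lia.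
apply: le_trans (singular_series_primorial_ge_ratio R _ m_gt0).
apply: le_trans (_ : (15 / 4) ^+ m.-1 / (3 ^ m)%:R <= _); last first.
  apply: ler_pM; rewrite ?exprn_ge0 ?invr_ge0 ?ler0n //.
    exact: singular_partial_primorial_ge.
  exact/ffact_ratio_ge/leq_2m_K.
case: (m) m_ge3 => // k _ /=; rewrite natrX exprS invfM.
have -> : (15 / 4 : R) ^+ k * (3^-1 * (3 ^+ k)^-1) = (5 / 4) ^+ k / 3.
  rewrite -[15 / 4 : R](_ : 3 * (5 / 4) = _); last by field.
  by rewrite exprMn; field; rewrite expf_neq0.
have bern : 1 + k%:R * (1 / 4) <= (5 / 4 : R) ^+ k.
  by rewrite (_ : 5 / 4 = 1 + 1 / 4); [apply: bernoulli_ineq; lra | field].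
rewrite -[k.+1%:R]natr1; lra.
Qed.

Theorem mainTheorem2 (R : realType) :
  (forall m : nat, (2 <= m)%N -> cvg (singular_partial R (Hset m) @ \oo)) /\
  ((fun m : nat => singular_series R (Hset m.+2)) @ \oo --> +oo).
Proof.
split=> [m m_ge2|]; first exact/cvg_singular_partial_primorial/ltnW.
apply/cvgryPge => A; near=> n.
have n_ge1 : (1 <= n)%N by near: n; apply: nbhs_infty_ge.
have A_le : 12 * A <= n%:R by near: n; apply: nbhs_infty_ger.
apply: le_trans (singular_series_primorial_ge R n.+2 n_ge1).
by rewrite -[n.+2%:R]natr1 -natr1; lra.
Unshelve. all: end_near.
Qed.
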